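(* For integers $j\ge 0$ define $$f_j:=\frac{j^2+5j+2}{8j+4}\binom{2j+2}{j+1}-4^j,\qquad h_j:=2^{2j-1}-\binom{2j+1}{j}+\binom{2j-1}{j-1}\ (j\ge 1),\qquad h_0:=0,$$ and let $C_j=\frac{1}{j+1}\binom{2j}{j}$ be the $j$-th Catalan number. Then for every integer $s\ge 1$, $$f_s=\sum_{i=1}^{s}C_{s-i}\bigl(2f_{i-1}+h_{i-1}\bigr).$$ *)

From HB Require Import structures.
From mathcomp Require Import all_boot all_order all_algebra.
Set Implicit Arguments. Unset Strict Implicit. Unset Printing Implicit Defensive.
Import Order.TTheory GRing.Theory Num.Theory.
Local Open Scope ring_scope.

Definition f (j : nat) : rat :=
  ((j ^ 2 + 5 * j + 2)%N%:R / (8 * j + 4)%N%:R) * ('C(j.*2.+2, j.+1))%:R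
  - 4%:R ^+ j.

Definition h (j : nat) : rat :=
  match j with
  | 0 => 0
  | k.+1 => (2 ^ (k.+1).*2.-1)%N%:R - ('C((k.+1).*2.+1, k.+1))%:R
            + ('C((k.+1).*2.-1, k))%:R
  end.

Definition catalan (j : nat) : rat := ('C(j.*2, j))%:R / (j.+1)%:R.

From HB Require Import structures.
From mathcomp Require Import all_boot all_order all_algebra.
From mathcomp.algebra_tactics Require Import ring lra.
From mathcomp Require Import zify.
Set Implicit Arguments. Unset Strict Implicit. Unset Printing Implicit Defensive.
Import Order.TTheory GRing.Theory Num.Theory.
Local Open Scope ring_scope.

(* Write b_k = C(2k, k) for the central binomial coefficients
   and Q_k = 4^k.  Every quantity of the theorem is a rational combination
   of b_k, b_{k+1} and Q_k:
     C_k = 2 b_k - b_{k+1}/2,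
     f_k = (k^2+5k+2)/(8k+4) b_{k+1} - Q_k,
     2 f_k + h_k = (k + 1/2) b_k + b_{k+1}/2 - (3/2) Q_k.
   The right-hand side of the theorem is the convolution (C * (2f+h))(s-1),
   so by linearity it reduces to the two classical convolution identities
     (b * b)(n) = 4^n            and          (b * Q)(n) = (2n+1) b_n,
   together with (k b_k * b)(n) = n/2 (b * b)(n) (symmetry of convolution). *)

Section Convolution.
Variable R : comPzRingType.

Definition conv (u v : nat -> R) (n : nat) : R :=
  \sum_(k < n.+1) u k * v (n - k)%N.

Lemma conv_comm u v n : conv u v n = conv v u n.
Proof.
rewrite /conv (reindex_inj rev_ord_inj) /=.
apply: eq_bigr => k _; rewrite subSS subKn; first exact: mulrC.
by rewrite -ltnS ltn_ord.
Qed.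

Lemma conv_recl u v n :
  conv u v n.+1 = u 0%N * v n.+1 + conv (fun k => u k.+1) v n.
Proof. by rewrite /conv big_ord_recl /= subn0. Qed.

Lemma eq_conv u u' v n : (forall k, u k = u' k) -> conv u v n = conv u' v n.
Proof. by move=> E; apply: eq_bigr => k _; rewrite E. Qed.

Lemma conv_add u w v n :
  conv (fun k => u k + w k) v n = conv u v n + conv w v n.
Proof. by rewrite /conv -big_split; apply: eq_bigr => k _; rewrite mulrDl. Qed.

Lemma conv_sub u w v n :
  conv (fun k => u k - w k) v n = conv u v n - conv w v n.
Proof. by rewrite /conv -sumrB; apply: eq_bigr => k _; rewrite mulrBl. Qed.

Lemma conv_scale c u v n : conv (fun k => c * u k) v n = c * conv u v n.
Proof. by rewrite /conv mulr_sumr; apply: eq_bigr => k _; rewrite mulrA. Qed.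

End Convolution.

(* In a self-convolution the index k and n - k play symmetric roles, so
   weighting the left factor by k yields half of the total weight n. *)
Lemma conv_weight_half (u : nat -> rat) n :
  conv (fun k => k%:R * u k) u n = n%:R / 2 * conv u u n.
Proof.
have E : conv (fun k => k%:R * u k) u n + conv u (fun k => k%:R * u k) n
         = n%:R * conv u u n.
  rewrite /conv -big_split mulr_sumr; apply: eq_bigr => /= k _.
  have hk : (k <= n)%N by rewrite -ltnS ltn_ord.
  rewrite natrB //; ring.
rewrite [conv u _ n]conv_comm in E.
have -> : n%:R / 2 * conv u u n = (n%:R * conv u u n) / 2 by ring.
by rewrite -E; field.
Qed.

Lemma natrS_add1 (k : nat) : k.+1%:R = k%:R + 1 :> rat.
Proof. by rewrite -addn1 natrD. Qed.

Lemma natr_add1_neq0 (k : nat) : k%:R + 1 != 0 :> rat.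
Proof. by rewrite -natrS_add1 pnatr_eq0. Qed.

Definition cbin (k : nat) : rat := ('C(k.*2, k))%:R.
Definition pow4 (k : nat) : rat := 4%:R ^+ k.

Lemma cbin0 : cbin 0 = 1. Proof. by rewrite /cbin bin0. Qed.

Lemma pow4S k : pow4 k.+1 = 4 * pow4 k.
Proof. by rewrite /pow4 exprS. Qed.

Lemma bin_odd_sym k : 'C(k.*2.+1, k) = 'C(k.*2.+1, k.+1).
Proof. by rewrite -[in RHS]bin_sub; [congr 'C(_, _)|]; lia. Qed.

Lemma cbinS_odd k : cbin k.+1 = 2 * ('C(k.*2.+1, k))%:R.
Proof. by rewrite /cbin doubleS binS -bin_odd_sym natrD; ring. Qed.

Lemma cbin_rec k : cbin k.+1 = (4 * k%:R + 2) / (k%:R + 1) * cbin k.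
Proof.
have Hnat : (k.+1 * 'C(k.*2.+1, k) = k.*2.+1 * 'C(k.*2, k))%N.
  by rewrite bin_odd_sym -(mul_bin_diag k.*2.+1 k).
have E : (k.+1)%:R * cbin k.+1 = (4 * k + 2)%N%:R * cbin k.
  rewrite cbinS_odd /cbin -!natrM; congr (_%:R).
  by rewrite mulnCA Hnat mulnA; congr (_ * _)%N; lia.
move: E; rewrite natrS_add1 natrD natrM => E.
by apply: (mulfI (natr_add1_neq0 k)); rewrite E; field; exact: natr_add1_neq0.
Qed.

(* sum_k C(2k,k) C(2(n-k),n-k) = 4^n: combine the recurrence with
   conv_weight_half and induct on n. *)
Lemma conv_cbin_cbin n : conv cbin cbin n = pow4 n.
Proof.
elim: n => [|n IH]; first by rewrite /conv big_ord1 cbin0 mulr1 /pow4 expr0.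
have H := conv_weight_half cbin n.+1.
rewrite conv_recl (@eq_conv _ _ (fun k => 4 * (k%:R * cbin k) + 2 * cbin k))
  in H; last by move=> k; rewrite cbin_rec natrS_add1; field;
  exact: natr_add1_neq0.
rewrite conv_add !conv_scale conv_weight_half IH in H.
apply: (@mulfI _ (n.+1%:R / 2)).
  by rewrite natrS_add1 mulf_eq0 negb_or natr_add1_neq0.
by rewrite -H pow4S natrS_add1; field.
Qed.

Lemma conv_cbin_pow4 n : conv cbin pow4 n = (2 * n%:R + 1) * cbin n.
Proof.
elim: n => [|n IH]; first by rewrite /conv big_ord1 cbin0 /pow4 expr0; ring.
rewrite /conv big_ord_recr /=.
rewrite (eq_bigr (fun i : 'I_n.+1 => 4 * (cbin i * pow4 (n - i)))); last first.
  move=> i _ /=; have hi : (i <= n)%N by rewrite -ltnS ltn_ord.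
  by rewrite subSn // pow4S; ring.
rewrite -mulr_sumr -[\sum_(_ < _) _]/(conv cbin pow4 n) IH subnn /pow4 expr0.
by rewrite cbin_rec natrS_add1; field; exact: natr_add1_neq0.
Qed.

Lemma pos_neq0 (x : rat) : 0 < x -> x != 0.
Proof. by move=> h; rewrite gt_eqF. Qed.

Lemma f_closed j :
  f j = (j%:R ^+ 2 + 5 * j%:R + 2) / (8 * j%:R + 4) * cbin j.+1 - pow4 j.
Proof.
rewrite /f -[('C(j.*2.+2, j.+1))%:R]/(cbin j.+1) -[4%:R ^+ j]/(pow4 j).
by congr (_ / _ * _ - _); rewrite !natrD ?natrX; ring.
Qed.

Lemma catalan_closed k : catalan k = 2 * cbin k - 1 / 2 * cbin k.+1.
Proof.
rewrite /catalan -[('C(k.*2, k))%:R]/(cbin k) cbin_rec natrS_add1.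
by field; exact: natr_add1_neq0.
Qed.

Definition fh (k : nat) : rat := 2 * f k + h k.

Lemma fh_closed k :
  fh k = (k%:R + 1 / 2) * cbin k + cbin k.+1 / 2 - 3 / 2 * pow4 k.
Proof.
rewrite /fh; case: k => [|j].
  have cbin1 : cbin 1 = 2 by [].
  by rewrite f_closed /h cbin1 cbin0 /pow4 expr0; field.
have e1 : ('C(j.*2.+1, j))%:R = cbin j.+1 / 2 :> rat by rewrite cbinS_odd; field.
have e2 : ('C(j.+1.*2.+1, j.+1))%:R = cbin j.+2 / 2 :> rat.
  by rewrite cbinS_odd; field.
have e3 : (2 ^ (j.*2.+1))%N%:R = 2 * pow4 j :> rat.
  have -> : (2 ^ (j.*2.+1) = 2 * 4 ^ j)%N by rewrite expnS -mul2n expnM.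
  by rewrite natrM natrX.
rewrite f_closed /h /= e1 e2 e3 (cbin_rec j.+1) pow4S natrS_add1.
have hj : (0 : rat) <= j%:R by rewrite ler0n.
by field; apply/andP; split; apply: pos_neq0; lra.
Qed.

Lemma conv_cbin_fh n : conv cbin fh n =
  n%:R / 2 * pow4 n + pow4 n / 2 + (4 * pow4 n - cbin n.+1) / 2
  - 3 / 2 * ((2 * n%:R + 1) * cbin n).
Proof.
rewrite conv_comm (@eq_conv _ _ (fun k =>
  (k%:R * cbin k + 1 / 2 * cbin k) + 1 / 2 * cbin k.+1 - 3 / 2 * pow4 k));
  last by move=> k; rewrite fh_closed; ring.
rewrite conv_sub !conv_add !conv_scale conv_weight_half conv_cbin_cbin.
have -> : conv (fun k => cbin k.+1) cbin n = pow4 n.+1 - cbin n.+1.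
  by rewrite -conv_cbin_cbin conv_recl cbin0; ring.
by rewrite conv_comm conv_cbin_pow4 pow4S; field.
Qed.

Theorem lemma2p1 (s : nat) (hs : (1 <= s)%N) :
  f s = \sum_(1 <= i < s.+1) catalan (s - i) * (2%:R * f i.-1 + h i.-1).
Proof.
case: s hs => [//|n] _.
have -> : \sum_(1 <= i < n.+2) catalan (n.+1 - i) * (2%:R * f i.-1 + h i.-1)
          = conv catalan fh n.
  rewrite -{1}[1%N]add0n big_addn big_mkord subn1 conv_comm.
  by apply: eq_bigr => i _; rewrite addn1 subSS /= mulrC.
rewrite (@eq_conv _ _ (fun k => 2 * cbin k - 1 / 2 * cbin k.+1));
  last by move=> k; rewrite catalan_closed.
rewrite conv_sub !conv_scale.
have -> : conv (fun k => cbin k.+1) fh n = conv cbin fh n.+1 - fh n.+1.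
  by rewrite conv_recl cbin0; ring.
rewrite !conv_cbin_fh fh_closed f_closed !pow4S !cbin_rec !natrS_add1.
have hn : (0 : rat) <= n%:R by rewrite ler0n.
by field; apply/and3P; split; apply: pos_neq0; lra.
Qed.
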